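(* Consider $\min_{x\in\mathbb{R}^p,z\in\mathbb{R}^N}F(x,z):=f(x,z)+g(x)+h(z)$, where: (i) $f$ is differentiable with $M$-Lipschitz joint gradient, i.e. $\|(\nabla_xf(x_1,z_1)-\nabla_xf(x_2,z_2),\nabla_zf(x_1,z_1)-\nabla_zf(x_2,z_2))\|\le M\|(x_1-x_2,z_1-z_2)\|$ for all arguments and some $M>0$, and $g:\mathbb{R}^p\to\mathbb{R}\cup\{\infty\}$, $h:\mathbb{R}^N\to\mathbb{R}\cup\{\infty\}$ are proper, lower semicontinuous and directionally differentiable; (ii) $F$ is bounded below; (iii) $g$ and $h$ are prox-bounded, i.e. $g+\frac\eta2\|\cdot\|^2$ and $h+\frac\eta2\|\cdot\|^2$ are bounded below for some $\eta>0$. Let $\{(x_t,z_t):t\ge0\}$ be generated by the following algorithm (GPALM), run indefinitely: fix an integer $r\ge1$, $\rho_1,\rho_2>1$, $\sigma_1,\sigma_2\in(0,1)$, $0<\underline\eta\le\overline\eta$, a starting point $(x_0,z_0)$, and $\hat\eta_0^x=\hat\eta_0^z=1$. At iteration $t$, for $l=0,1,2,\dots$ set $\eta_t^x=\rho_1^l\hat\eta_t^x$, $\eta_t^z=\rho_2^l\hat\eta_t^z$ and compute $$x_{t+1}\in\operatorname{Prox}_{g/\eta_t^x}\Big(x_t-\tfrac1{\eta_t^x}\nabla_xf(x_t,z_t)\Big),\quad z_{t+1}\in\operatorname{Prox}_{h/\eta_t^z}\Big(z_t-\tfrac1{\eta_t^z}\nabla_zf(x_{t+1},z_t)\Big),$$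 stopping at the first $l$ for which $$F(x_{t+1},z_{t+1})\le\max\{F(x_{t-r+1},z_{t-r+1}),\dots,F(x_t,z_t)\}-\tfrac{\sigma_1}2\eta_t^x\|x_{t+1}-x_t\|^2-\tfrac{\sigma_2}2\eta_t^z\|z_{t+1}-z_t\|^2$$ (only indices $\ge0$ in the maximum). Then set $$\hat\eta_{t+1}^x=\min\Big\{\overline\eta,\max\Big\{\underline\eta,\tfrac{\langle x_{t+1}-x_t,\nabla_xf(x_{t+1},z_{t+1})-\nabla_xf(x_t,z_t)\rangle}{\|x_{t+1}-x_t\|^2}\Big\}\Big\},$$ $$\hat\eta_{t+1}^z=\min\Big\{\overline\eta,\max\Big\{\underline\eta,\tfrac{\langle z_{t+1}-z_t,\nabla_zf(x_{t+1},z_{t+1})-\nabla_zf(x_{t+1},z_t)\rangle}{\|z_{t+1}-z_t\|^2}\Big\}\Big\}.$$ If the generated sequence is bounded and $F$ is continuous on a compact set containing the sequence, then $\lim_{t\to\infty}\|x_{t+1}-x_t\|=0$ and $\lim_{t\to\infty}\|z_{t+1}-z_t\|=0$.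
   Context: $\|\cdot\|$ is the Euclidean norm. $\operatorname{Prox}_{\phi/\eta}(y):=\operatorname{argmin}_u\{\tfrac1\eta\phi(u)+\tfrac12\|u-y\|^2\}$. The directional derivative is $\phi'(u;d):=\lim_{\tau\to+0}\frac{\phi(u+\tau d)-\phi(u)}{\tau}$ (possibly $+\infty$). *)

From HB Require Import structures.
From mathcomp Require Import all_boot all_order all_algebra.
From mathcomp Require Import all_classical all_reals all_analysis.
Set Implicit Arguments. Unset Strict Implicit. Unset Printing Implicit Defensive.
Import Order.TTheory GRing.Theory Num.Theory.
Import numFieldNormedType.Exports.
Local Open Scope classical_set_scope.
Local Open Scope ring_scope.

Section Defs.
Variable R : realType.

Definition dotv n (u v : 'rV[R]_n) : R := \sum_(i < n) u ord0 i * v ord0 i.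
Definition enorm n (u : 'rV[R]_n) : R := Num.sqrt (dotv u u).
Definition enorm2 p N (u : 'rV[R]_p) (v : 'rV[R]_N) : R :=
  Num.sqrt (enorm u ^+ 2 + enorm v ^+ 2).

Definition has_partial_grads p N (f : 'rV[R]_p -> 'rV[R]_N -> R)
  (gx : 'rV[R]_p -> 'rV[R]_N -> 'rV[R]_p) (gz : 'rV[R]_p -> 'rV[R]_N -> 'rV[R]_N) :=
  forall x z (e : R), 0 < e -> exists2 d : R, 0 < d &
    forall u v, enorm2 u v < d ->
      `| f (x + u) (z + v) - f x z - dotv (gx x z) u - dotv (gz x z) v |
        <= e * enorm2 u v.

Definition proper_fun n (g : 'rV[R]_n -> \bar R) :=
  (forall x, g x != -oo%E) /\ exists x, g x \is a fin_num.

Definition lsc_fun n (g : 'rV[R]_n -> \bar R) :=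
  forall x (a : \bar R), (a < g x)%E -> exists2 d : R, 0 < d &
    forall y, enorm (y - x) < d -> (a < g y)%E.

Definition dir_diff n (g : 'rV[R]_n -> \bar R) :=
  forall u d, g u \is a fin_num -> exists l : \bar R,
    (fun tau : R => ((g (u + tau *: d)%R - g u) * (tau^-1)%:E)%E) @ 0^'+ --> l.

Definition in_prox n (g : 'rV[R]_n -> \bar R) (eta : R) (y u : 'rV[R]_n) :=
  forall w, ((eta^-1)%:E * g u + (enorm (u - y) ^+ 2 / 2)%:E <=
             (eta^-1)%:E * g w + (enorm (w - y) ^+ 2 / 2)%:E)%E.

Definition Fobj p N (f : 'rV[R]_p -> 'rV[R]_N -> R) (g : 'rV[R]_p -> \bar R)
  (h : 'rV[R]_N -> \bar R) x z : \bar R := ((f x z)%:E + g x + h z)%E.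

(* max{F(x_{t-r+1},z_{t-r+1}),...,F(x_t,z_t)} over indices >= 0 *)
Definition Fmax p N (F : 'rV[R]_p -> 'rV[R]_N -> \bar R) (r : nat)
  (x : nat -> 'rV[R]_p) (z : nat -> 'rV[R]_N) (t : nat) : \bar R :=
  \big[Order.max/-oo%E]_(t.+1 - r <= i < t.+1) F (x i) (z i).

Definition clamp (etal etau a : R) : R := Num.min etau (Num.max etal a).

End Defs.

(* The argument is the one of Grippo, Lampariello and Lucidi for nonmonotone
   line searches.  For t >= r let W t be the maximum of F over the window of the
   last r iterates; an accepted step lies below W t minus a penalty
   e t >= c (|x_{t+1} - x_t|^2 + |z_{t+1} - z_t|^2), with c > 0 because the
   step-size guesses never drop below min(etal, 1).  Hence W is eventually
   nonincreasing and, F being bounded below, converges to some V.  If W t is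
   attained at the index m t, then by induction on j the values F at m t - j
   tend to V: the descent inequality at m t - j - 1 forces the penalty there to
   vanish, and uniform continuity of F on the compact set carries the
   convergence to the previous iterate.  Every index is of the form
   m (t + r) - j - 1 with j < r, so e t -> 0. *)

From HB Require Import structures.
From mathcomp Require Import all_boot all_order all_algebra.
From mathcomp Require Import all_classical all_reals all_analysis.
From mathcomp Require Import lra zify.
Import Order.TTheory GRing.Theory Num.Theory.
Import numFieldNormedType.Exports.
Local Open Scope classical_set_scope.
Local Open Scope ring_scope.

Section Euclidean.
Context {R : realType} {n : nat}.
Implicit Types u v : 'rV[R]_n.

Lemma enorm_ge0 u : 0 <= enorm u.
Proof. exact: sqrtr_ge0. Qed.

Lemma normr_coord_le_enorm u i : `|u ord0 i| <= enorm u.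
Proof.
have sqr_coord_ge0 j : 0 <= u ord0 j * u ord0 j by rewrite -expr2 sqr_ge0.
rewrite -sqrtr_sqr /enorm ler_sqrt; last exact: sumr_ge0.
by rewrite /dotv (bigD1 i) //= expr2 lerDl sumr_ge0.
Qed.

Lemma enorm_lt_ball u v e : enorm (u - v) < e -> ball u e v.
Proof.
move=> uve; split=> [|i j]; first exact: le_lt_trans (enorm_ge0 _) uve.
rewrite (ord1 i) /ball /=; apply: le_lt_trans uve.
by have := normr_coord_le_enorm (u - v) j; rewrite !mxE.
Qed.

End Euclidean.

Lemma in_prox_fin_num {R : realType} {n} {g : 'rV[R]_n -> \bar R} {eta y u} :
  proper_fun g -> 0 < eta -> in_prox g eta y u -> g u \is a fin_num.
Proof.
move=> [gNy [w gw]] eta0 /(_ w).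
case gu: (g u) => [a| |] //; last by move: (gNy u); rewrite gu.
by rewrite -(fineK gw) -EFinM -EFinD mulry gtr0_sg ?invr_gt0 // mul1e addye.
Qed.

Lemma Fobj_prox_fin_num {R : realType} {p N : nat} (f : 'rV[R]_p -> 'rV[R]_N -> R)
    {g : 'rV[R]_p -> \bar R} {h : 'rV[R]_N -> \bar R} {eta eta' : R} {y u y' v} :
  proper_fun g -> proper_fun h -> 0 < eta -> 0 < eta' ->
  in_prox g eta y u -> in_prox h eta' y' v -> Fobj f g h u v \is a fin_num.
Proof.
move=> gP hP eta0 eta'0 gu hv.
by rewrite /Fobj !fin_numD /= (in_prox_fin_num gP eta0 gu) (in_prox_fin_num hP eta'0 hv).
Qed.

Lemma bigmax_seq_attained {d} {T : orderType d} {I : eqType} (x0 : T) (s : seq I)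
    (F : I -> T) :
  s != [::] -> (forall i, (x0 <= F i)%O) ->
  exists2 i, i \in s & \big[Order.max/x0]_(i <- s) F i = F i.
Proof.
elim: s => // a s IH _ x0F; rewrite big_cons.
case: s IH => [|b s] IH.
  by exists a; rewrite ?mem_head // big_nil max_l.
have [//|i si ->] := IH _ x0F.
have [aFi|Fia] := leP (F a) (F i); first by exists i; rewrite // in_cons si orbT.
by exists a; rewrite ?mem_head.
Qed.

Section Fmax.
Context {R : realType} {p N : nat}.
Variables (F : 'rV[R]_p -> 'rV[R]_N -> \bar R) (r : nat).
Variables (x : nat -> 'rV[R]_p) (z : nat -> 'rV[R]_N).

Lemma Fmax_ge t i : (t.+1 - r <= i <= t)%N -> (F (x i) (z i) <= Fmax F r x z t)%E.
Proof. by move=> win; apply: le_bigmax_seq => //; rewrite mem_index_iota; lia. Qed.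

Lemma Fmax_attained t : (0 < r)%N ->
  exists2 i, (t.+1 - r <= i <= t)%N & Fmax F r x z t = F (x i) (z i).
Proof.
move=> r_gt0; rewrite /Fmax.
have [||i] := bigmax_seq_attained -oo%E (index_iota (t.+1 - r) t.+1)
    (fun i => F (x i) (z i)).
- by rewrite -size_eq0 size_iota; lia.
- by move=> i; exact: leNye.
by rewrite mem_index_iota => win ->; exists i => //; lia.
Qed.

Lemma Fmax_argmax (a : nat -> R) : (0 < r)%N ->
  (forall i, (0 < i)%N -> F (x i) (z i) = (a i)%:E) ->
  exists m : nat -> nat, forall t, (r <= t)%N ->
    [/\ (t.+1 - r <= m t <= t)%N, Fmax F r x z t = (a (m t))%:E &
        forall i, (t.+1 - r <= i <= t)%N -> a i <= a (m t)].
Proof.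
move=> r_gt0 aE.
suff /choice[m mP] : forall t, exists i, (r <= t)%N ->
    [/\ (t.+1 - r <= i <= t)%N, Fmax F r x z t = (a i)%:E &
        forall j, (t.+1 - r <= j <= t)%N -> a j <= a i] by exists m.
move=> t; have [i win Fi] := Fmax_attained t r_gt0; exists i => rt.
have FE : Fmax F r x z t = (a i)%:E by rewrite Fi aE //; lia.
split=> // j winj; rewrite -lee_fin -FE -aE ?Fmax_ge //; lia.
Qed.

End Fmax.

Section StepSizes.
Context {R : realType}.

Lemma clamp_ge (etal etau a : R) : etal <= etau -> etal <= clamp etal etau a.
Proof. by move=> etal_le_etau; rewrite /clamp le_min etal_le_etau le_max lexx. Qed.

Lemma stepsize_guess_ge {etal etau : R} {T : eqType} {u : nat -> T} {hs q : nat -> R} :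
  etal <= etau -> hs 0%N = 1 ->
  (forall t, (u t.+1 != u t -> hs t.+1 = clamp etal etau (q t)) /\
             (u t.+1 = u t -> etal <= hs t.+1 <= etau)) ->
  forall t, Num.min etal 1 <= hs t.
Proof.
move=> etal_le_etau hs0 hsS [|t]; first by rewrite hs0 ge_min lexx orbT.
rewrite ge_min; have [clamped fixed] := hsS t.
have [/fixed/andP[-> //]|/clamped ->] := eqVneq (u t.+1) (u t).
by rewrite clamp_ge.
Qed.

Lemma trial_stepsize_ge {rho hs mu : R} k :
  1 <= rho -> 0 <= mu <= hs -> mu <= rho ^+ k * hs.
Proof.
move=> rho_ge1 /andP[mu_ge0 mu_le_hs].
by apply: le_trans mu_le_hs (ler_peMl (le_trans mu_ge0 mu_le_hs) (exprn_ege1 _ rho_ge1)).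
Qed.

Lemma backtrack_penalty_ge {s s' rho hs mu : R} (d : R) k :
  0 <= s' <= s -> 1 <= rho -> 0 <= mu <= hs ->
  s' / 2 * mu * d ^+ 2 <= s / 2 * (rho ^+ k * hs) * d ^+ 2.
Proof.
move=> /andP[s'_ge0 s'_le_s] rho_ge1 mu_hs; have /andP[mu_ge0 _] := mu_hs.
apply: ler_wpM2r; first exact: sqr_ge0.
apply: ler_pM; [exact: divr_ge0 | by [] | lra | exact: trial_stepsize_ge].
Qed.

End StepSizes.

Lemma lt_of_scaled_sqr {R : realType} {c d b dl : R} :
  0 < c -> 0 <= d -> 0 <= dl -> c * d ^+ 2 <= b -> b < c * dl ^+ 2 -> d < dl.
Proof.
move=> c0 d0 dl0 db bdl; rewrite -(ltr_pXn2r (_ : 0 < 2)%N) ?nnegrE //.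
by rewrite -(ltr_pM2l c0); apply: le_lt_trans bdl.
Qed.

Lemma cvg0_of_scaled_sqr_le {R : realType} {d b : nat -> R} {c : R} :
  0 < c -> (forall t, 0 <= d t) -> (forall t, c * d t ^+ 2 <= b t) ->
  b @ \oo --> 0 -> d @ \oo --> 0.
Proof.
move=> c0 d0 db /(cvgr_lt 0) b0; apply/cvgr0Pnorm_lt => eps eps0.
apply: filterS (b0 (c * eps ^+ 2) _) => [t bt|]; last by rewrite mulr_gt0 ?exprn_gt0.
by rewrite ger0_norm //; apply: lt_of_scaled_sqr c0 _ (ltW eps0) (db t) bt.
Qed.

Lemma compact_seq_ucont {R : realType} {T : pseudoMetricType R} {K : set T}
    {F : T -> \bar R} (w : nat -> T) (S : set nat) (a : nat -> R) (B : R) :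
  compact K -> {within K, continuous F} -> (forall q, K q -> F q != -oo%E) ->
  (forall i, S i -> [/\ K (w i), F (w i) = (a i)%:E & a i <= B]) ->
  forall eps, 0 < eps -> exists2 dl, 0 < dl &
    forall i j, S i -> S j -> ball (w i) dl (w j) -> `|a i - a j| < eps.
Proof.
move=> cK cF FK Sw eps eps0; apply: contrapT => noUC.
(* Otherwise the points of eps-far pairs at every scale dl form a proper filter
   base on K, and continuity of F at a cluster point gives a contradiction. *)
pose bad dl := [set w i | i in [set i | S i /\ exists j,
  [/\ S j, ball (w i) dl (w j) & eps <= `|a i - a j|]]].
have bad_n0 dl : 0 < dl -> bad dl !=set0.
  move=> dl0; apply: contrapT => nobad; apply: noUC; exists dl => // i j Si Sj wij.
  rewrite ltNge; apply/negP => epsij; apply: nobad.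
  by exists (w i); exists i => //; split => //; exists j.
pose G := filter_from [set dl : R | 0 < dl] bad.
have G_filter : ProperFilter G.
  apply: filter_from_proper bad_n0; apply: filter_from_filter; first by exists 1.
  move=> d1 d2 d10 d20; exists (Num.min d1 d2); first by rewrite /= lt_min d10.
  move=> _ [i [Si [j [Sj wij epsij]]] <-].
  by split; exists i => //; split => //; exists j; split => //;
    apply: le_ball wij; rewrite ge_min lexx ?orbT.
have [k [Kk clk]] : exists k, K k /\ cluster G k.
  by apply: cK; exists 1 => //= _ [i [Si _] <-]; have [] := Sw i Si.
have far_pair dl : 0 < dl -> exists i j, [/\ S i, S j, ball k dl (w i),
    ball k dl (w j) & eps <= `|a i - a j|].
  move=> dl0; have dl2 : 0 < dl / 2 by rewrite divr_gt0.
  have [_ [[i [Si [j [Sj wij epsij]]] <-] kwi]] : bad (dl / 2) `&` ball k (dl / 2) !=set0.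
    by apply: clk; [exists (dl / 2) | apply/nbhs_ballP; exists (dl / 2)].
  exists i, j; split => //; first by apply: le_ball kwi; rewrite ler_pdivrMr //; lra.
  by rewrite [dl]splitr; apply: ball_triangle kwi wij.
have [dl dl0 close] : exists2 dl, 0 < dl & forall i j, S i -> S j ->
    ball k dl (w i) -> ball k dl (w j) -> `|a i - a j| < eps.
  have Fk_cvg := (subspace_continuousP K F).1 cF k Kk.
  case Fk : (F k) Fk_cvg => [r0| |] Fk_cvg; last by have := FK k Kk; rewrite Fk.
  - have /fine_cvgP[_ /cvgrPdist_lt /(_ _ (divr_gt0 eps0 (ltr0n _ 2)))] := Fk_cvg.
    move=> /nbhs_ballP[dl dl0 near_r0]; exists dl => // i j Si Sj ki kj.
    have [Ki Fi _] := Sw i Si; have [Kj Fj _] := Sw j Sj.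
    have := near_r0 _ ki Ki; have := near_r0 _ kj Kj; rewrite /= Fi Fj /=.
    by have := ler_distD r0 (a i) (a j); rewrite (distrC (a i) r0); lra.
  (* The bound B on the sequence excludes a cluster point where F is +oo. *)
  - move/cvgeyPgt: Fk_cvg => /(_ B) /nbhs_ballP[dl dl0 near_oo].
    exists dl => // i j Si _ ki _; have [Ki Fi aiB] := Sw i Si.
    by have := near_oo _ ki Ki; rewrite /= Fi lte_fin ltNge aiB.
have [i [j [Si Sj ki kj epsij]]] := far_pair dl dl0.
by have := close i j Si Sj ki kj; rewrite ltNge epsij.
Qed.

Lemma compact_iterates_ucont {R : realType} {p N : nat}
    {K : set ('rV[R]_p * 'rV[R]_N)} {F : 'rV[R]_p -> 'rV[R]_N -> \bar R}
    {x : nat -> 'rV[R]_p} {z : nat -> 'rV[R]_N} (a : nat -> R) (B : R) :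
  compact K -> {within K, continuous (fun q => F q.1 q.2)} ->
  (forall q, K q -> F q.1 q.2 != -oo%E) -> (forall t, K (x t, z t)) ->
  (forall i, (0 < i)%N -> F (x i) (z i) = (a i)%:E /\ a i <= B) ->
  forall eps, 0 < eps -> exists2 dl, 0 < dl & forall i, (0 < i)%N ->
    enorm (x i.+1 - x i) < dl -> enorm (z i.+1 - z i) < dl -> `|a i.+1 - a i| < eps.
Proof.
move=> cK cF FK Kxz aB eps eps0.
have [|dl dl0 ucont] := compact_seq_ucont (fun i => (x i, z i))
  [set i | (0 < i)%N] a B cK cF FK _ eps eps0.
  by move=> i /aB[]; split.
by exists dl => // i i0 dxi dzi; apply: ucont => //=; split; exact: enorm_lt_ball.
Qed.

Section NonmonotoneDescent.
Context {R : realType}.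
Context {a e : nat -> R} {r : nat} {m : nat -> nat} {c : R}.
Hypothesis window_ub : forall t i, (r <= t)%N -> (t.+1 - r <= i <= t)%N -> a i <= a (m t).
Hypothesis argmax_window : forall t, (r <= t)%N -> (t.+1 - r <= m t <= t)%N.
Hypothesis descent : forall t, (r <= t)%N -> a t.+1 <= a (m t) - e t.
Hypothesis e_ge0 : forall t, 0 <= e t.
Hypothesis a_ge : forall i, (0 < i)%N -> c <= a i.
Hypothesis a_step_ucont : forall eps : R, 0 < eps -> exists2 dl : R, 0 < dl &
  forall i, (0 < i)%N -> e i < dl -> `|a i.+1 - a i| < eps.

Local Notation W t := (a (m t)).

Lemma window_max_decr t : (r <= t)%N -> W t.+1 <= W t.
Proof.
move=> rt; have win := argmax_window _ (leqW rt).
have [->|ne] := eqVneq (m t.+1) t.+1.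
  by have := descent _ rt; have := e_ge0 t; lra.
by apply: window_ub => //; lia.
Qed.

Lemma window_max_nonincreasing s t : (r <= s <= t)%N -> W t <= W s.
Proof.
case/andP=> rs; elim: t => [|t IH] st; first by have -> : s = 0%N by lia.
have [-> //|ne] := eqVneq s t.+1.
by apply: le_trans (window_max_decr t _) (IH _); lia.
Qed.

Lemma le_first_window_max i : (0 < i)%N -> a i <= W r.
Proof.
move=> i0; have [ir|ri] := leqP i r; first by apply: window_ub; lia.
have dec : a i <= W i.-1 - e i.-1 by rewrite -{1}(prednK i0); apply: descent; lia.
have Wle : W i.-1 <= W r by apply: window_max_nonincreasing; lia.
by have := e_ge0 i.-1; lra.
Qed.

Let V := limn (fun t => W t).

Lemma window_max_cvg : (fun t => W t) @ \oo --> V.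
Proof.
apply: (@near_nonincreasing_is_cvgn _ _ c).
  by exists r => // s rs t st; apply: window_max_nonincreasing; rewrite rs.
by exists r => // t /= rt; apply: a_ge; have := argmax_window _ rt; lia.
Qed.

Lemma argmax_sub_cvgy j : (fun t => m t - j)%N @ \oo --> \oo.
Proof.
apply/cvgnyPge => A; exists (A + j + r)%N => // t /= tA.
have := argmax_window t; lia.
Qed.

Lemma argmax_descent_cvg0 j : (fun t => a (m t - j)%N) @ \oo --> V ->
  (fun t => e (m t - j.+1)%N) @ \oo --> 0.
Proof.
move=> aV; set k := fun t => (m t - j.+1)%N.
have Wk : (fun t => W (k t)) @ \oo --> V.
  exact: cvg_comp (argmax_sub_cvgy j.+1) window_max_cvg.
apply: (@squeeze_cvgr _ _ _ _ (cst 0) (fun t => W (k t) - a (m t - j)%N)).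
- exists (r + r + j)%N => // t /= tr; rewrite e_ge0 /=.
  have win : (t.+1 - r <= m t <= t)%N by apply: argmax_window; lia.
  have -> : (m t - j)%N = (k t).+1 by rewrite /k; lia.
  have : a (k t).+1 <= W (k t) - e (k t) by apply: descent; rewrite /k; lia.
  lra.
- exact: cvg_cst.
- by rewrite -(subrr V); apply: cvgB.
Qed.

Lemma argmax_shift_cvg j : (fun t => a (m t - j)%N) @ \oo --> V.
Proof.
elim: j => [|j IH].
  by under eq_fun do rewrite subn0; exact: window_max_cvg.
have e0 := argmax_descent_cvg0 _ IH.
have step0 : (fun t => a (m t - j)%N - a (m t - j.+1)%N) @ \oo --> 0.
  apply/cvgr0Pnorm_lt => eps eps0; have [dl dl0 ucont] := a_step_ucont _ eps0.
  have eS := cvgr_lt 0 e0 dl dl0.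
  have pos : \forall t \near \oo, (0 < m t - j.+1)%N.
    by move/cvgnyPgt : (argmax_sub_cvgy j.+1); apply.
  near=> t.
  have -> : (m t - j)%N = (m t - j.+1).+1 by near: t; apply: filterS pos => s /= ?; lia.
  by apply: ucont; [near: t; exact: pos | near: t; exact: eS].
have -> : (fun t => a (m t - j.+1)%N) =
    (fun t => a (m t - j)%N) - (fun t => a (m t - j)%N - a (m t - j.+1)%N).
  by apply/funext => t /=; rewrite opprB addrC subrK.
by rewrite -[V]subr0; apply: cvgB.
Unshelve. all: by end_near.
Qed.

Theorem nonmonotone_descent_cvg0 : e @ \oo --> 0.
Proof.
apply/cvgr0Pnorm_lt => eps eps0.
have small : \forall t \near \oo, forall j : 'I_r, e (m (t + r) - j.+1)%N < eps.
  apply: filter_forall => j.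
  have := argmax_descent_cvg0 _ (argmax_shift_cvg j).
  by rewrite -(cvg_shiftn r) => /(cvgr_lt 0)/(_ eps eps0).
apply: filterS small => t small_t.
have win := argmax_window _ (leq_addl t r).
have jr : (m (t + r) - t.+1 < r)%N by lia.
have := small_t (Ordinal jr) => /=.
have -> : (m (t + r) - (m (t + r) - t.+1).+1)%N = t by lia.
by rewrite ger0_norm ?e_ge0.
Qed.

End NonmonotoneDescent.

Theorem lemma3 (R : realType) (p N : nat)
  (f : 'rV[R]_p -> 'rV[R]_N -> R)
  (gx : 'rV[R]_p -> 'rV[R]_N -> 'rV[R]_p) (gz : 'rV[R]_p -> 'rV[R]_N -> 'rV[R]_N)
  (g : 'rV[R]_p -> \bar R) (h : 'rV[R]_N -> \bar R) (M : R)
  (* (i) *)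
  (Hgrad : has_partial_grads f gx gz)
  (HM : 0 < M)
  (Hlip : forall x1 z1 x2 z2,
      enorm2 (gx x1 z1 - gx x2 z2) (gz x1 z1 - gz x2 z2) <= M * enorm2 (x1 - x2) (z1 - z2))
  (Hgprop : proper_fun g) (Hhprop : proper_fun h)
  (Hglsc : lsc_fun g) (Hhlsc : lsc_fun h)
  (Hgdd : dir_diff g) (Hhdd : dir_diff h)
  (* (ii) *)
  (HFbdd : exists c : R, forall x z, (c%:E <= Fobj f g h x z)%E)
  (* (iii) *)
  (Hproxb : exists2 eta : R, 0 < eta &
      (exists c : R, forall x, (c%:E <= g x + (eta / 2 * enorm x ^+ 2)%:E)%E) /\
      (exists c : R, forall z, (c%:E <= h z + (eta / 2 * enorm z ^+ 2)%:E)%E))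
  (* algorithm parameters *)
  (r : nat) (rho1 rho2 sigma1 sigma2 etal etau : R)
  (Hr : (1 <= r)%N) (Hrho1 : 1 < rho1) (Hrho2 : 1 < rho2)
  (Hs1 : 0 < sigma1 < 1) (Hs2 : 0 < sigma2 < 1)
  (Heta : 0 < etal <= etau)
  (* generated sequences: iterates, step-size guesses, accepted backtracking
     index l_t, and trial points of the inner loop *)
  (x : nat -> 'rV[R]_p) (z : nat -> 'rV[R]_N) (hx hz : nat -> R)
  (l : nat -> nat) (xt : nat -> nat -> 'rV[R]_p) (zt : nat -> nat -> 'rV[R]_N)
  (Hhx0 : hx 0%N = 1) (Hhz0 : hz 0%N = 1)
  (Hprox : forall t k, (k <= l t)%N ->
      in_prox g (rho1 ^+ k * hx t)
        (x t - (rho1 ^+ k * hx t)^-1 *: gx (x t) (z t)) (xt t k) /\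
      in_prox h (rho2 ^+ k * hz t)
        (z t - (rho2 ^+ k * hz t)^-1 *: gz (xt t k) (z t)) (zt t k))
  (Hfail : forall t k, (k < l t)%N ->
      ~ (Fobj f g h (xt t k) (zt t k) <=
         Fmax (Fobj f g h) r x z t
         - (sigma1 / 2 * (rho1 ^+ k * hx t) * enorm (xt t k - x t) ^+ 2)%:E
         - (sigma2 / 2 * (rho2 ^+ k * hz t) * enorm (zt t k - z t) ^+ 2)%:E)%E)
  (Hacc : forall t,
      (Fobj f g h (xt t (l t)) (zt t (l t)) <=
         Fmax (Fobj f g h) r x z t
         - (sigma1 / 2 * (rho1 ^+ l t * hx t) * enorm (xt t (l t) - x t) ^+ 2)%:E
         - (sigma2 / 2 * (rho2 ^+ l t * hz t) * enorm (zt t (l t) - z t) ^+ 2)%:E)%E)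
  (Hxnext : forall t, x t.+1 = xt t (l t))
  (Hznext : forall t, z t.+1 = zt t (l t))
  (Hhxnext : forall t,
      (x t.+1 != x t ->
       hx t.+1 = clamp etal etau
         (dotv (x t.+1 - x t) (gx (x t.+1) (z t.+1) - gx (x t) (z t))
          / enorm (x t.+1 - x t) ^+ 2)) /\
      (x t.+1 = x t -> etal <= hx t.+1 <= etau))
  (Hhznext : forall t,
      (z t.+1 != z t ->
       hz t.+1 = clamp etal etau
         (dotv (z t.+1 - z t) (gz (x t.+1) (z t.+1) - gz (x t.+1) (z t))
          / enorm (z t.+1 - z t) ^+ 2)) /\
      (z t.+1 = z t -> etal <= hz t.+1 <= etau))
  (* the sequence is bounded, and F is continuous on a compact set containing it *)
  (Hbdd : exists B : R, forall t, enorm (x t) <= B /\ enorm (z t) <= B)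
  (HK : exists K : set ('rV[R]_p * 'rV[R]_N),
      [/\ compact K, (forall t, K (x t, z t)) &
          {within K, continuous (fun q => Fobj f g h q.1 q.2)}]) :
  (fun t => enorm (x t.+1 - x t)) @ \oo --> (0 : R) /\
  (fun t => enorm (z t.+1 - z t)) @ \oo --> (0 : R).
Proof.
set Fo := Fobj f g h.
have [etal_gt0 etal_le_etau] := andP Heta.
pose mu := Num.min etal 1.
have mu_gt0 : 0 < mu by rewrite lt_min etal_gt0 ltr01.
have mu_hx t : 0 <= mu <= hx t
  by rewrite (ltW mu_gt0) (stepsize_guess_ge etal_le_etau Hhx0 Hhxnext).
have mu_hz t : 0 <= mu <= hz t
  by rewrite (ltW mu_gt0) (stepsize_guess_ge etal_le_etau Hhz0 Hhznext).
(* No finiteness is known at the arbitrary starting point (x 0, z 0). *)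
have Fo_fin i : (0 < i)%N -> Fo (x i) (z i) \is a fin_num.
  case: i => // t _; have [gprox hprox] := Hprox t (l t) (leqnn _).
  rewrite Hxnext Hznext; apply: Fobj_prox_fin_num Hgprop Hhprop _ _ gprox hprox.
    exact: lt_le_trans mu_gt0 (trial_stepsize_ge _ (ltW Hrho1) (mu_hx t)).
  exact: lt_le_trans mu_gt0 (trial_stepsize_ge _ (ltW Hrho2) (mu_hz t)).
pose a i := fine (Fo (x i) (z i)).
have aE i : (0 < i)%N -> Fo (x i) (z i) = (a i)%:E by move/Fo_fin/fineK.
have [m mP] := Fmax_argmax Fo r x z a Hr aE.
have argmax_window t : (r <= t)%N -> (t.+1 - r <= m t <= t)%N by case/mP.
have window_ub t i : (r <= t)%N -> (t.+1 - r <= i <= t)%N -> a i <= a (m t).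
  by move=> /mP[_ _]; apply.
have [[s1_gt0 _] [s2_gt0 _]] := (andP Hs1, andP Hs2).
have smin1 : 0 <= Num.min sigma1 sigma2 <= sigma1.
  by rewrite ge_min lexx le_min (ltW s1_gt0) (ltW s2_gt0).
have smin2 : 0 <= Num.min sigma1 sigma2 <= sigma2.
  by rewrite ge_min lexx orbT le_min (ltW s1_gt0) (ltW s2_gt0).
pose cc := Num.min sigma1 sigma2 / 2 * mu.
have cc_gt0 : 0 < cc by rewrite !mulr_gt0 // lt_min s1_gt0.
pose e t := cc * enorm (x t.+1 - x t) ^+ 2 + cc * enorm (z t.+1 - z t) ^+ 2.
have [e_ge_x e_ge_z] : (forall t, cc * enorm (x t.+1 - x t) ^+ 2 <= e t) /\
    (forall t, cc * enorm (z t.+1 - z t) ^+ 2 <= e t).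
  by split=> t; rewrite /e (lerDl, lerDr) mulr_ge0 ?sqr_ge0 ?(ltW cc_gt0).
have e_ge0 t : 0 <= e t by rewrite addr_ge0 // mulr_ge0 ?sqr_ge0 ?(ltW cc_gt0).
have descent t : (r <= t)%N -> a t.+1 <= a (m t) - e t.
  move=> rt; have := Hacc t; have [_ -> _] := mP t rt.
  rewrite -Hxnext -Hznext -/Fo aE // -!EFinB lee_fin => accepted.
  apply: le_trans accepted _.
  have := backtrack_penalty_ge (enorm (x t.+1 - x t)) (l t) smin1 (ltW Hrho1) (mu_hx t).
  have := backtrack_penalty_ge (enorm (z t.+1 - z t)) (l t) smin2 (ltW Hrho2) (mu_hz t).
  by rewrite /e /cc; lra.
have [c Fc] := HFbdd.
have a_ge i : (0 < i)%N -> c <= a i by move=> i0; rewrite -lee_fin -aE.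
have [K [cK Kxz cF]] := HK.
have ucont eps : 0 < eps -> exists2 dl, 0 < dl &
    forall i, (0 < i)%N -> e i < dl -> `|a i.+1 - a i| < eps.
  move=> eps0.
  have [||dl dl0 ucontK] := compact_iterates_ucont a (a (m r)) cK cF _ Kxz _ _ eps0.
  - by move=> q _; apply: contraTneq (Fc q.1 q.2) => ->; rewrite leeNy_eq.
  - move=> i i0; split; first exact: aE.
    exact: (le_first_window_max window_ub argmax_window descent e_ge0).
  exists (cc * dl ^+ 2) => [|i i0 ei]; first by rewrite mulr_gt0 ?exprn_gt0.
  apply: ucontK => //.
    exact: lt_of_scaled_sqr cc_gt0 (enorm_ge0 _) (ltW dl0) (e_ge_x i) ei.
  exact: lt_of_scaled_sqr cc_gt0 (enorm_ge0 _) (ltW dl0) (e_ge_z i) ei.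
have e_cvg0 := nonmonotone_descent_cvg0 window_ub argmax_window descent e_ge0 a_ge ucont.
by split; [exact: cvg0_of_scaled_sqr_le cc_gt0 (fun t => enorm_ge0 _) e_ge_x e_cvg0
          |exact: cvg0_of_scaled_sqr_le cc_gt0 (fun t => enorm_ge0 _) e_ge_z e_cvg0].
Qed.
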